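(* Let $G$ be an unweighted graph (loops allowed) and let $F$ be a bipartite graph on vertices $v_1,\dots,v_m$. Let $H$ be an $\mathcal{H}$-blow-up of $F$ with blown-up graphs $H_1,\dots,H_m$, where $\mathcal{H}$ is the class of graphs that are cross-bipartite swapping in $G$. Then for every $U\subseteq V(F)$ and every $u\in V(F)\setminus U$, \[ \hom(H^{U},G)\le\hom(H^{U\cup\{u\}},G). \]
   Context: $\hom(\cdot,G)$ counts homomorphisms into $G$. The tensor product $H'\times K_2$ has vertex set $V(H')\times\{1,2\}$, with $(x,i)\sim(y,j)$ iff $xy\in E(H')$ and $i\ne j$. For $A,B\subseteq V(G)$, $\hom_{\mathrm b}(H'\times K_2,G[A,B])$ counts homomorphisms $H'\times K_2\to G$ mapping $V(H')\times\{1\}$ into $A$ and $V(H')\times\{2\}$ into $B$; $H'$ is cross-bipartite swapping in $G$ if $\hom(H',G[A])\hom(H',G[B])\le\hom_{\mathrm b}(H'\times K_2,G[A,B])$ for all $A,B\subseteq V(G)$. The $\mathcal{H}$-blow-up $H$ of $F$ is the disjoint union of $H_1,\dots,H_m\in\mathcal{H}$ (on vertex sets $V_1,\dots,V_m$) with all edges between $V_i$ and $V_j$ added whenever $v_iv_j\in E(F)$. For $U\subseteq V(F)$, the graph $H^{U}$ is defined as follows: take two vertex-disjoint copies of $H$, on $\bigsqcup_i W_i$ and $\bigsqcup_i W_i'$, where $W_i,W_i'$ are copies of $V_i$; then for each $j$ with $v_j\in U$, delete all edges inside $W_j$ and inside $W_j'$ and instead join the copy $w\in W_j$ of $x\in V_j$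 to the copy $w'\in W_j'$ of $y\in V_j$ whenever $xy\in E(H_j)$ (so the graph on $W_j\sqcup W_j'$ becomes $H_j\times K_2$ instead of $H_j\sqcup H_j$). All other edges are as in the two copies of $H$. *)

From mathcomp Require Import all_boot.
Set Implicit Arguments. Unset Strict Implicit. Unset Printing Implicit Defensive.

Definition symmetric_rel (T : Type) (e : rel T) := forall x y, e x y = e y x.
Definition simple_rel (T : Type) (e : rel T) :=
  symmetric_rel e /\ forall x, ~~ e x x.

Definition hom_restr (V T : finType) (e : rel V) (g : rel T) (P : V -> pred T) : nat :=
  #|[set f : {ffun V -> T} |
       [forall x, f x \in P x] && [forall x, forall y, e x y ==> g (f x) (f y)]]|.

Definition hom (V T : finType) (e : rel V) (g : rel T) : nat :=
  hom_restr e g (fun _ => predT).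

(* hom(H', G[A]) : homomorphisms into the induced subgraph G[A] *)
Definition hom_ind (V T : finType) (e : rel V) (g : rel T) (A : {set T}) : nat :=
  hom_restr e g (fun _ => mem A).

(* tensor product H' x K_2 on V * bool; side 1 = false, side 2 = true *)
Definition tensorK2 (V : finType) (e : rel V) : rel (V * bool) :=
  fun p q => e p.1 q.1 && (p.2 != q.2).

Definition hom_bip (V T : finType) (e : rel V) (g : rel T) (A B : {set T}) : nat :=
  hom_restr (tensorK2 e) g (fun p => if p.2 then mem B else mem A).

Definition cross_bipartite_swapping (V T : finType) (e : rel V) (g : rel T) : Prop :=
  forall A B : {set T}, hom_ind e g A * hom_ind e g B <= hom_bip e g A B.

Definition bipartite_rel (I : Type) (f : rel I) :=
  exists col : I -> bool, forall i j, f i j -> col i != col j.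

(* The graph H^U, where H is the blow-up of F (on 'I_m, adjacency Fadj) with
   blown-up graphs (V i, e i). Vertex (v, c) : {i & V i} * bool; c marks the
   copy (W or W'). *)
Definition blowupU (m : nat) (Fadj : rel 'I_m) (V : 'I_m -> finType)
    (e : forall i, rel (V i)) (U : {set 'I_m}) : rel ({i : 'I_m & V i} * bool) :=
  fun p q =>
    let: (u, c) := p in let: (v, d) := q in
    ((tag u == tag v) && e (tag u) (tagged u) (tagged_as u v)
       && (if tag u \in U then c != d else c == d))
    || (Fadj (tag u) (tag v) && (c == d)).

From mathcomp Require Import all_boot.

(* Fix a homomorphism on all of H^U except the two copies W_u, W'_u of V(H_u).
   Since u is not in U and F has no loop at u, its extensions to W_u and W'_u
   are independent: each is a homomorphism of H_u into the induced subgraph on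
   the common neighbourhood A (resp. B) of the images of the F-neighbours of u
   in that copy, so there are hom(H_u, G[A]) hom(H_u, G[B]) of them. In
   H^{U + u} the extensions are exactly the homomorphisms of H_u x K_2 into
   G[A, B]. Cross-bipartite swapping of H_u compares the two counts fibre by
   fibre. *)

Definition homs_restr {V T : finType} (e : rel V) (g : rel T) (P : V -> pred T) :
    {set {ffun V -> T}} :=
  [set f : {ffun V -> T} |
     [forall x, f x \in P x] && [forall x, forall y, e x y ==> g (f x) (f y)]].

Lemma hom_restrE {V T : finType} (e : rel V) (g : rel T) (P : V -> pred T) :
  hom_restr e g P = #|homs_restr e g P|.
Proof. by []. Qed.

Lemma hom_eq_of_empty_target {V T : finType} (e e' : rel V) (g : rel T) :
  #|T| = 0 -> hom e g = hom e' g.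
Proof.
move=> /card0_eq T0; rewrite /hom !hom_restrE; apply: eq_card => f.
rewrite !inE; congr (_ && _); apply/forallP/forallP => _ x; by have := T0 (f x).
Qed.

Lemma card_sum_fibers {A B : finType} (S : {set A}) (p : A -> B) :
  #|S| = \sum_(k : B) #|[set x in S | p x == k]|.
Proof.
rewrite -sum1_card (partition_big p predT) //=.
by apply: eq_bigr => k _; rewrite -sum1_card; apply: eq_bigl => x; rewrite !inE.
Qed.

Section SwapOneVertex.

Context {TG : finType} (g : rel TG) {m : nat} (Fadj : rel 'I_m).
Context {V : 'I_m -> finType} (e : forall i, rel (V i)) (u : 'I_m).

Local Notation X := ({i : 'I_m & V i} * bool)%type.
Local Notation homs R := (homs_restr R g (fun _ => predT)).

Lemma blowupU_in (W : {set 'I_m}) (a b : V u) (c d : bool) :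
  blowupU Fadj e W (Tagged V a, c) (Tagged V b, d)
  = e u a b && (if u \in W then c != d else c == d) || Fadj u u && (c == d).
Proof. by rewrite /blowupU /= eqxx tagged_asE. Qed.

Lemma blowupU_in_out (W : {set 'I_m}) (a : V u) (c : bool) (y : X) :
  tag y.1 != u -> blowupU Fadj e W (Tagged V a, c) y = Fadj u (tag y.1) && (c == y.2).
Proof. by case: y => y d /= yu; rewrite /blowupU /= eq_sym (negbTE yu). Qed.

Lemma blowupU_out_in (W : {set 'I_m}) (a : V u) (c : bool) (x : X) :
  tag x.1 != u -> blowupU Fadj e W x (Tagged V a, c) = Fadj (tag x.1) u && (x.2 == c).
Proof. by case: x => x d /= xu; rewrite /blowupU /= (negbTE xu). Qed.

Lemma blowupU_out (U : {set 'I_m}) (x y : X) :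
  tag x.1 != u -> blowupU Fadj e (u |: U) x y = blowupU Fadj e U x y.
Proof. by case: x y => x c [y d] /= xu; rewrite /blowupU in_setU1 (negbTE xu). Qed.

Context (t0 : TG).

Definition outer (f : {ffun X -> TG}) : {ffun X -> TG} :=
  [ffun x => if tag x.1 == u then t0 else f x].

Definition fiber (R : rel X) (k : {ffun X -> TG}) := [set f in homs R | outer f == k].

Definition side (f : {ffun X -> TG}) (c : bool) : {ffun V u -> TG} :=
  [ffun a => f (Tagged V a, c)].

Definition common_nbhd (k : {ffun X -> TG}) (c : bool) : {set TG} :=
  [set t | [forall y : X, (tag y.1 != u) && (y.2 == c) ==>
     (Fadj u (tag y.1) ==> g t (k y)) && (Fadj (tag y.1) u ==> g (k y) t)]].

Definition glue (k : {ffun X -> TG}) (psi : {ffun V u * bool -> TG}) : {ffun X -> TG} :=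
  [ffun x => untag (k x) (fun a => psi (a, x.2)) x.1].

Lemma outer_out (f : {ffun X -> TG}) (x : X) : tag x.1 != u -> outer f x = f x.
Proof. by move=> xu; rewrite ffunE (negbTE xu). Qed.

Lemma outer_side_inj (f1 f2 : {ffun X -> TG}) :
  outer f1 = outer f2 -> (forall c, side f1 c = side f2 c) -> f1 = f2.
Proof.
move=> Eout Eside; apply/ffunP => -[[i a] c].
have [iu | iu] := eqVneq i u.
  by subst i; move/ffunP: (Eside c) => /(_ a); rewrite !ffunE.
by move/ffunP: Eout => /(_ (Tagged V a, c)); rewrite !outer_out.
Qed.

Lemma glue_in (k : {ffun X -> TG}) psi (a : V u) (c : bool) :
  glue k psi (Tagged V a, c) = psi (a, c).
Proof. by rewrite ffunE (@untagE _ _ _ _ _ _ (Tagged V a) (erefl u)). Qed.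

Lemma glue_out (k : {ffun X -> TG}) psi (x : X) : tag x.1 != u -> glue k psi x = k x.
Proof. by move=> xu; rewrite ffunE untag_dflt. Qed.

Lemma outer_glue (f : {ffun X -> TG}) psi : outer (glue (outer f) psi) = outer f.
Proof.
apply/ffunP => x; have [xu | xu] := eqVneq (tag x.1) u; first by rewrite !ffunE xu eqxx.
by rewrite !outer_out // glue_out // outer_out.
Qed.

Lemma homs_edge (R : rel X) (f : {ffun X -> TG}) :
  f \in homs R -> forall x y, R x y -> g (f x) (f y).
Proof.
by rewrite inE => /andP[_ /forallP fR] x y; move: (fR x) => /forallP/(_ y)/implyP.
Qed.

Lemma side_homs_restr (U : {set 'I_m}) (f : {ffun X -> TG}) (c : bool) :
  u \notin U -> f \in homs (blowupU Fadj e U) ->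
  side f c \in homs_restr (e u) g (fun _ => mem (common_nbhd (outer f) c)).
Proof.
move=> /negbTE uU /homs_edge fR; rewrite inE; apply/andP; split.
  apply/forallP => a; rewrite ffunE inE; apply/forallP => y; apply/implyP.
  case/andP=> yu /eqP yc; rewrite outer_out //.
  by apply/andP; split; apply/implyP => Fy; apply: fR;
    rewrite ?blowupU_in_out ?blowupU_out_in // Fy yc eqxx.
apply/forallP => a; apply/forallP => b; apply/implyP => eab; rewrite !ffunE.
by apply: fR; rewrite blowupU_in uU eab eqxx.
Qed.

Lemma fiber_le_hom_ind (U : {set 'I_m}) (k : {ffun X -> TG}) :
  u \notin U ->
  #|fiber (blowupU Fadj e U) k|
  <= hom_ind (e u) g (common_nbhd k false) * hom_ind (e u) g (common_nbhd k true).
Proof.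
move=> uU; rewrite /hom_ind !hom_restrE -cardsX.
pose sides f := (side f false, side f true).
rewrite -(@card_in_imset _ _ sides); last first.
  move=> f1 f2; rewrite !inE => /andP[_ /eqP Eout1] /andP[_ /eqP Eout2] [Efalse Etrue].
  by apply: outer_side_inj => [|[]]; rewrite ?Eout1 ?Eout2.
apply/subset_leq_card/subsetP => _ /imsetP[f + ->]; rewrite inE => /andP[fR /eqP <-].
by rewrite inE /= !(side_homs_restr _ _ _ uU fR).
Qed.

Lemma glue_homs (U : {set 'I_m}) (f0 : {ffun X -> TG}) psi :
  ~~ Fadj u u -> f0 \in homs (blowupU Fadj e U) ->
  psi \in homs_restr (tensorK2 (e u)) g
    (fun p => if p.2 then mem (common_nbhd (outer f0) true)
              else mem (common_nbhd (outer f0) false)) ->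
  glue (outer f0) psi \in homs (blowupU Fadj e (u |: U)).
Proof.
move=> Fuu /homs_edge f0R; rewrite !inE => /andP[/forallP psiA /forallP psiR].
have psiN a c : psi (a, c) \in common_nbhd (outer f0) c by have := psiA (a, c); case: c.
apply/andP; split; first by apply/forallP.
apply/forallP => -[[i a] c]; apply/forallP => -[[j b] d]; apply/implyP.
have [? | iu] := eqVneq i u; have [? | ju] := eqVneq j u; try subst i; try subst j.
- rewrite blowupU_in setU11 (negbTE Fuu) orbF !glue_in => eab.
  by have := psiR (a, c) => /forallP/(_ (b, d))/implyP; apply; rewrite /tensorK2 /= eab.
- rewrite blowupU_in_out // glue_in glue_out // => /andP[/= Fu /eqP /= <-].
  move: (psiN a c); rewrite inE => /forallP/(_ (Tagged V b, c)).
  by rewrite /= ju eqxx Fu => /andP[].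
- rewrite blowupU_out_in // glue_in glue_out // => /andP[/= Fu /eqP /= ->].
  move: (psiN b d); rewrite inE => /forallP/(_ (Tagged V a, d)).
  by rewrite /= iu eqxx Fu => /andP[].
- by rewrite blowupU_out // !glue_out // !outer_out //; apply: f0R.
Qed.

Lemma hom_bip_le_fiber (U : {set 'I_m}) (f0 : {ffun X -> TG}) :
  ~~ Fadj u u -> f0 \in homs (blowupU Fadj e U) ->
  hom_bip (e u) g (common_nbhd (outer f0) false) (common_nbhd (outer f0) true)
  <= #|fiber (blowupU Fadj e (u |: U)) (outer f0)|.
Proof.
move=> Fuu f0R; rewrite /hom_bip hom_restrE -(@card_in_imset _ _ (glue (outer f0))).
  apply/subset_leq_card/subsetP => _ /imsetP[psi psiS ->].
  by rewrite inE glue_homs // outer_glue eqxx.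
move=> psi1 psi2 _ _ E; apply/ffunP => -[a c].
by rewrite -!(glue_in (outer f0)) E.
Qed.

Lemma hom_sum_fibers (R : rel X) : hom R g = \sum_k #|fiber R k|.
Proof. by rewrite /hom hom_restrE (card_sum_fibers _ outer). Qed.

End SwapOneVertex.

Theorem lemma5p2 (TG : finType) (g : rel TG) (m : nat) (Fadj : rel 'I_m)
    (V : 'I_m -> finType) (e : forall i, rel (V i))
    (U : {set 'I_m}) (u : 'I_m) :
  symmetric_rel g ->
  simple_rel Fadj -> bipartite_rel Fadj ->
  (forall i, simple_rel (e i)) ->
  (forall i, cross_bipartite_swapping (e i) g) ->
  u \notin U ->
  hom (blowupU Fadj e U) g <= hom (blowupU Fadj e (u |: U)) g.
Proof.
move=> _ [_ Firr] _ _ cbs uU.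
have [TG0 | /card_gt0P[t0 _]] := posnP #|TG|.
  by rewrite (hom_eq_of_empty_target _ (blowupU Fadj e (u |: U)) _ TG0).
rewrite !(hom_sum_fibers g u t0); apply: leq_sum => k _.
have [-> | [f0]] := set_0Vmem (fiber g u t0 (blowupU Fadj e U) k).
  by rewrite cards0.
rewrite inE => /andP[f0R /eqP <-].
apply: leq_trans (fiber_le_hom_ind g Fadj e u t0 U _ uU) _.
apply: leq_trans (cbs u _ _) _.
exact: hom_bip_le_fiber.
Qed.
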